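(* Let $\mathcal{U}=\begin{pmatrix}\mathcal{A}&\mathcal{M}\\ \mathcal{N}&\mathcal{B}\end{pmatrix}$ be a generalized matrix ring in which $\mathcal{A}$ and $\mathcal{B}$ are 2-torsion free, and let $\phi:\mathcal{U}\to\mathcal{U}$ be an additive mapping such that $\phi(U)\circ V+U\circ\phi(V)=0$ whenever $U,V\in\mathcal{U}$ satisfy $UV=VU=0$. Then $\phi(I)$ lies in the center $Z(\mathcal{U})$ of $\mathcal{U}$. In particular $P\phi(I)=\phi(I)P$ for every idempotent $P\in\mathcal{U}$.
   Context: A generalized matrix ring is built from: unital rings $\mathcal{A},\mathcal{B}$; a unital $(\mathcal{A},\mathcal{B})$-bimodule $\mathcal{M}$ which is faithful on both sides (if $A\mathcal{M}=\{0\}$ then $A=0$; if $\mathcal{M}B=\{0\}$ then $B=0$); a unital $(\mathcal{B},\mathcal{A})$-bimodule $\mathcal{N}$; and bimodule homomorphisms $\mathcal{M}\otimes_{\mathcal{B}}\mathcal{N}\to\mathcal{A}$, $\mathcal{N}\otimes_{\mathcal{A}}\mathcal{M}\to\mathcal{B}$, written $MN$, $NM$, with $(MN)M'=M(NM')$, $(NM)N'=N(MN')$. $\mathcal{U}$ is the ring of matrices $\begin{pmatrix}A&M\\N&B\end{pmatrix}$ under the usual matrix operations, with identity $I$. 2-torsion free: $2X=0\Rightarrow X=0$. $X\circ Y=XY+YX$. The center is $Z(\mathcal{U})=\{\mathrm{diag}(A,B): AM=MB,\ NA=BN \text{ for all } M\in\mathcal{M},N\in\mathcal{N}\}$. *)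

From HB Require Import structures.
From mathcomp Require Import all_boot all_order all_algebra.
Set Implicit Arguments. Unset Strict Implicit. Unset Printing Implicit Defensive.
Import GRing.Theory.
Local Open Scope ring_scope.

(* Data of a generalized matrix ring (A, M, N, B):
   A, B unital rings; M an (A,B)-bimodule; N a (B,A)-bimodule;
   pairings  mn : M x N -> A,  nm : N x M -> B  (bimodule homomorphisms
   from the balanced tensor products). *)
Record GMR (A B : pzRingType) (M N : zmodType) := {
  actAM : A -> M -> M;
  actMB : M -> B -> M;
  actBN : B -> N -> N;
  actNA : N -> A -> N;
  pMN : M -> N -> A;
  pNM : N -> M -> B;
  actAM_addl : forall a a' m, actAM (a + a') m = actAM a m + actAM a' m;
  actAM_addr : forall a m m', actAM a (m + m') = actAM a m + actAM a m';
  actAM_mul : forall a a' m, actAM (a * a') m = actAM a (actAM a' m);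
  actAM_1 : forall m, actAM 1 m = m;
  actMB_addl : forall m m' b, actMB (m + m') b = actMB m b + actMB m' b;
  actMB_addr : forall m b b', actMB m (b + b') = actMB m b + actMB m b';
  actMB_mul : forall m b b', actMB m (b * b') = actMB (actMB m b) b';
  actMB_1 : forall m, actMB m 1 = m;
  actM_assoc : forall a m b, actMB (actAM a m) b = actAM a (actMB m b);
  actBN_addl : forall b b' n, actBN (b + b') n = actBN b n + actBN b' n;
  actBN_addr : forall b n n', actBN b (n + n') = actBN b n + actBN b n';
  actBN_mul : forall b b' n, actBN (b * b') n = actBN b (actBN b' n);
  actBN_1 : forall n, actBN 1 n = n;
  actNA_addl : forall n n' a, actNA (n + n') a = actNA n a + actNA n' a;
  actNA_addr : forall n a a', actNA n (a + a') = actNA n a + actNA n a';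
  actNA_mul : forall n a a', actNA n (a * a') = actNA (actNA n a) a';
  actNA_1 : forall n, actNA n 1 = n;
  actN_assoc : forall b n a, actNA (actBN b n) a = actBN b (actNA n a);
  pMN_addl : forall m m' n, pMN (m + m') n = pMN m n + pMN m' n;
  pMN_addr : forall m n n', pMN m (n + n') = pMN m n + pMN m n';
  pMN_bal : forall m b n, pMN (actMB m b) n = pMN m (actBN b n);
  pMN_l : forall a m n, pMN (actAM a m) n = a * pMN m n;
  pMN_r : forall m n a, pMN m (actNA n a) = pMN m n * a;
  pNM_addl : forall n n' m, pNM (n + n') m = pNM n m + pNM n' m;
  pNM_addr : forall n m m', pNM n (m + m') = pNM n m + pNM n m';
  pNM_bal : forall n a m, pNM (actNA n a) m = pNM n (actAM a m);
  pNM_l : forall b n m, pNM (actBN b n) m = b * pNM n m;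
  pNM_r : forall n m b, pNM n (actMB m b) = pNM n m * b;
  pM_assoc : forall m n m', actAM (pMN m n) m' = actMB m (pNM n m');
  pN_assoc : forall n m n', actBN (pNM n m) n' = actNA n (pMN m n');
  M_faithful_l : forall a, (forall m, actAM a m = 0) -> a = 0;
  M_faithful_r : forall b, (forall m, actMB m b = 0) -> b = 0
}.

Record gmat (A B : pzRingType) (M N : zmodType) :=
  GMat { g11 : A; g12 : M; g21 : N; g22 : B }.

Section Ops.
Variables (A B : pzRingType) (M N : zmodType) (G : GMR A B M N).

Definition gadd (X Y : gmat A B M N) : gmat A B M N :=
  GMat (g11 X + g11 Y) (g12 X + g12 Y) (g21 X + g21 Y) (g22 X + g22 Y).

Definition gmul (X Y : gmat A B M N) : gmat A B M N :=
  GMat (g11 X * g11 Y + pMN G (g12 X) (g21 Y))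
       (actAM G (g11 X) (g12 Y) + actMB G (g12 X) (g22 Y))
       (actBN G (g22 X) (g21 Y) + actNA G (g21 X) (g11 Y))
       (pNM G (g21 X) (g12 Y) + g22 X * g22 Y).

Definition gzero : gmat A B M N := GMat 0 0 0 0.
Definition gone : gmat A B M N := GMat 1 0 0 1.

Definition gjordan (X Y : gmat A B M N) : gmat A B M N :=
  gadd (gmul X Y) (gmul Y X).

Definition gcenter (Z : gmat A B M N) : Prop :=
  forall X, gmul Z X = gmul X Z.

End Ops.

Definition two_torsion_free (R : zmodType) : Prop :=
  forall x : R, x + x = 0 -> x = 0.

From HB Require Import structures.
From mathcomp Require Import all_boot all_order all_algebra.
Set Implicit Arguments. Unset Strict Implicit. Unset Printing Implicit Defensive.
Import GRing.Theory.
Local Open Scope ring_scope.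

(* Write D(U, V) = phi(U) o V + U o phi(V); D is biadditive and vanishes on
   zero-product pairs.  For the diagonal idempotents E11, E22 the relation
   D(E11, E22) = 0 together with 2-torsion freeness makes phi(I) diagonal,
   phi(I) = diag(a, b).  For X = E12(m) the pairs (E11 + X, E22 - X) and
   (X, -X) have zero products, so expanding D(E11 + X, E22 - X) leaves
   D(E11, -X) + D(X, E22) = 0; as phi(X) + phi(-X) = 0, its (1,2) entry
   reads a m = m b.  Symmetrically n a = b n.  Faithfulness of M then puts
   diag(a, b) in the center. *)

Section GmatZmodule.
Variables (A B : pzRingType) (M N : zmodType).
Local Notation gmat := (gmat A B M N).

Definition gmat_tuple (X : gmat) := (g11 X, g12 X, g21 X, g22 X).
Definition tuple_gmat (t : A * M * N * B) : gmat := GMat t.1.1.1 t.1.1.2 t.1.2 t.2.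
Lemma gmat_tupleK : cancel gmat_tuple tuple_gmat. Proof. by case. Qed.
HB.instance Definition _ := Choice.copy gmat (can_type gmat_tupleK).

Definition gopp (X : gmat) : gmat := GMat (- g11 X) (- g12 X) (- g21 X) (- g22 X).
Lemma gaddA : associative (@gadd A B M N).
Proof. by move=> [? ? ? ?] [? ? ? ?] [? ? ? ?]; congr GMat; apply: addrA. Qed.
Lemma gaddC : commutative (@gadd A B M N).
Proof. by move=> [? ? ? ?] [? ? ? ?]; congr GMat; apply: addrC. Qed.
Lemma gadd0r : left_id (gzero A B M N) (@gadd A B M N).
Proof. by move=> [? ? ? ?]; congr GMat; apply: add0r. Qed.
Lemma gaddNr : left_inverse (gzero A B M N) gopp (@gadd A B M N).
Proof. by move=> [? ? ? ?]; congr GMat; apply: addNr. Qed.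
HB.instance Definition _ := GRing.isZmodule.Build gmat gaddA gaddC gadd0r gaddNr.

Lemma gaddE (X Y : gmat) : gadd X Y = X + Y. Proof. by []. Qed.
Lemma GMatD a m n b a' m' n' b' :
  GMat a m n b + GMat a' m' n' b' = GMat (a + a') (m + m') (n + n') (b + b') :> gmat.
Proof. by []. Qed.
Lemma GMat_eq0 a m n b : (GMat a m n b = 0 :> gmat) -> [/\ a = 0, m = 0, n = 0 & b = 0].
Proof. by case. Qed.
End GmatZmodule.

Section Additive.
Variables (U V : zmodType) (f : U -> V).
Hypothesis f_add : {morph f : x y / x + y}.
Lemma additive0 : f 0 = 0.
Proof. by apply: (addrI (f 0)); rewrite -f_add !addr0. Qed.
Lemma additiveN : {morph f : x / - x}.
Proof. by move=> x; apply: (addrI (f x)); rewrite -f_add !subrr additive0. Qed.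
End Additive.

Section GeneralizedMatrixRing.
Variables (A B : pzRingType) (M N : zmodType) (G : GMR A B M N).
Local Notation actAM := (actAM G).
Local Notation actMB := (actMB G).
Local Notation actBN := (actBN G).
Local Notation actNA := (actNA G).
Local Notation pMN := (pMN G).
Local Notation pNM := (pNM G).

Lemma actAM0l m : actAM 0 m = 0.
Proof. exact: (additive0 (f := actAM^~ m) (fun x y => actAM_addl G x y m)). Qed.
Lemma actAM0r a : actAM a 0 = 0.
Proof. exact: additive0 (actAM_addr G a). Qed.
Lemma actMB0l b : actMB 0 b = 0.
Proof. exact: (additive0 (f := actMB^~ b) (fun x y => actMB_addl G x y b)). Qed.
Lemma actMB0r m : actMB m 0 = 0.
Proof. exact: additive0 (actMB_addr G m). Qed.
Lemma actBN0l n : actBN 0 n = 0.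
Proof. exact: (additive0 (f := actBN^~ n) (fun x y => actBN_addl G x y n)). Qed.
Lemma actBN0r b : actBN b 0 = 0.
Proof. exact: additive0 (actBN_addr G b). Qed.
Lemma actNA0l a : actNA 0 a = 0.
Proof. exact: (additive0 (f := actNA^~ a) (fun x y => actNA_addl G x y a)). Qed.
Lemma actNA0r n : actNA n 0 = 0.
Proof. exact: additive0 (actNA_addr G n). Qed.
Lemma pMN0l n : pMN 0 n = 0.
Proof. exact: (additive0 (f := pMN^~ n) (fun x y => pMN_addl G x y n)). Qed.
Lemma pMN0r m : pMN m 0 = 0.
Proof. exact: additive0 (pMN_addr G m). Qed.
Lemma pNM0l m : pNM 0 m = 0.
Proof. exact: (additive0 (f := pNM^~ m) (fun x y => pNM_addl G x y m)). Qed.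
Lemma pNM0r n : pNM n 0 = 0.
Proof. exact: additive0 (pNM_addr G n). Qed.

Lemma actAMNl a m : actAM (- a) m = - actAM a m.
Proof. exact: (additiveN (f := actAM^~ m) (fun x y => actAM_addl G x y m) a). Qed.
Lemma actAMNr a m : actAM a (- m) = - actAM a m.
Proof. exact: additiveN (actAM_addr G a) m. Qed.
Lemma actMBNr m b : actMB m (- b) = - actMB m b.
Proof. exact: additiveN (actMB_addr G m) b. Qed.
Lemma actNANl n a : actNA (- n) a = - actNA n a.
Proof. exact: (additiveN (f := actNA^~ a) (fun x y => actNA_addl G x y a) n). Qed.

Definition pairingE := (actAM0l, actAM0r, actMB0l, actMB0r, actBN0l, actBN0r,
  actNA0l, actNA0r, pMN0l, pMN0r, pNM0l, pNM0r,
  actAM_1 G, actMB_1 G, actBN_1 G, actNA_1 G).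

Lemma gmulDl : left_distributive (gmul G) +%R.
Proof.
move=> [a m n b] [a' m' n' b'] [x u v y]; rewrite !GMatD /gmul /=.
by congr GMat; rewrite !(mulrDl, pMN_addl, actAM_addl, actMB_addl, actBN_addl,
  actNA_addl, pNM_addl) addrACA.
Qed.

Lemma gmulDr : right_distributive (gmul G) +%R.
Proof.
move=> [x u v y] [a m n b] [a' m' n' b']; rewrite !GMatD /gmul /=.
by congr GMat; rewrite !(mulrDr, pMN_addr, actAM_addr, actMB_addr, actBN_addr,
  actNA_addr, pNM_addr) addrACA.
Qed.

Lemma gjordanDl : left_distributive (gjordan G) +%R.
Proof. by move=> X Y Z; rewrite /gjordan !gaddE gmulDl gmulDr addrACA. Qed.

Lemma gjordanDr : right_distributive (gjordan G) +%R.
Proof. by move=> X Y Z; rewrite /gjordan !gaddE gmulDl gmulDr addrACA. Qed.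

Definition intertwinesM (a : A) (b : B) := forall m, actAM a m = actMB m b.
Definition intertwinesN (a : A) (b : B) := forall n, actNA n a = actBN b n.

Lemma intertwinesM_commA a b : intertwinesM a b -> forall x, GRing.comm a x.
Proof.
move=> hab x; apply: subr0_eq; apply: (@M_faithful_l _ _ _ _ G) => m.
by rewrite actAM_addl actAMNl !actAM_mul !hab -actM_assoc subrr.
Qed.

Lemma intertwinesM_commB a b : intertwinesM a b -> forall y, GRing.comm b y.
Proof.
move=> hab y; apply: subr0_eq; apply: (@M_faithful_r _ _ _ _ G) => m.
by rewrite actMB_addr actMBNr !actMB_mul -!hab actM_assoc subrr.
Qed.

Lemma gcenter_diag a b :
  intertwinesM a b -> intertwinesN a b -> gcenter G (GMat a 0 0 b).
Proof.
move=> hM hN [x u v y]; rewrite /gmul /= !pairingE !addr0 !add0r.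
congr GMat; first exact: intertwinesM_commA; last exact: intertwinesM_commB.
  exact: hM.
by rewrite hN.
Qed.
End GeneralizedMatrixRing.

Section ZeroProductJordan.
Variables (A B : pzRingType) (M N : zmodType) (G : GMR A B M N).
Local Notation gmat := (gmat A B M N).
Variable phi : gmat -> gmat.
Hypothesis phi_add : {morph phi : X Y / X + Y}.

Definition jordan_defect (U V : gmat) := gjordan G (phi U) V + gjordan G U (phi V).

Hypothesis phi_zero_product :
  forall U V, gmul G U V = 0 -> gmul G V U = 0 -> jordan_defect U V = 0.
Hypotheses (hA : two_torsion_free A) (hB : two_torsion_free B).

Lemma jordan_defectDl U1 U2 V :
  jordan_defect (U1 + U2) V = jordan_defect U1 V + jordan_defect U2 V.
Proof. by rewrite /jordan_defect phi_add !gjordanDl addrACA. Qed.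

Lemma jordan_defectDr U V1 V2 :
  jordan_defect U (V1 + V2) = jordan_defect U V1 + jordan_defect U V2.
Proof. by rewrite /jordan_defect phi_add !gjordanDr addrACA. Qed.

Local Notation E11 := (GMat 1 0 0 0 : gmat).
Local Notation E22 := (GMat 0 0 0 1 : gmat).
Local Notation p := (phi E11).
Local Notation q := (phi E22).

Lemma jordan_defect_E11_E22 : jordan_defect E11 E22 = 0.
Proof. by apply: phi_zero_product; rewrite /gmul /= !pairingE !(mulr0, mul0r, addr0). Qed.

Lemma phiE_entries : [/\ g11 q = 0, g22 p = 0, g12 p + g12 q = 0 & g21 p + g21 q = 0].
Proof.
move: jordan_defect_E11_E22; rewrite /jordan_defect /gjordan.
case: p => p1 p2 p3 p4; case: q => q1 q2 q3 q4; rewrite /gmul /gadd /= => /GMat_eq0.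
rewrite !(pairingE, mulr0, mul0r, mulr1, mul1r, addr0, add0r).
by case=> /hA -> e12 e21 /hB ->.
Qed.

Lemma phi1_diag : phi (gone A B M N) = GMat (g11 p) 0 0 (g22 q).
Proof.
have -> : gone A B M N = E11 + E22 by rewrite GMatD !(addr0, add0r).
rewrite phi_add; case: phiE_entries.
case: p => p1 p2 p3 p4; case: q => q1 q2 q3 q4 /= -> -> e12 e21.
by rewrite GMatD e12 e21 addr0 add0r.
Qed.

Lemma phi_intertwinesM : intertwinesM G (g11 p) (g22 q).
Proof.
move=> m; pose X : gmat := GMat 0 m 0 0; pose X' : gmat := GMat 0 (- m) 0 0.
have zUV : jordan_defect (E11 + X) (E22 + X') = 0.
  apply: phi_zero_product; rewrite /X /X' !GMatD /gmul /=;
  by rewrite !(pairingE, actAMNr, mulr0, mul0r, addr0, add0r, addNr).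
have zXX' : jordan_defect X X' = 0.
  by apply: phi_zero_product; rewrite /X /X' /gmul /= !(pairingE, mulr0, addr0).
have phiXX' : phi X + phi X' = 0.
  by rewrite -phi_add /X /X' GMatD subrr !addr0 (additive0 phi_add).
have e12 := addr0_eq (congr1 (@g12 _ _ _ _) phiXX').
rewrite jordan_defectDl !jordan_defectDr jordan_defect_E11_E22 zXX' add0r addr0 in zUV.
move: zUV => /(congr1 (@g12 _ _ _ _)); rewrite /jordan_defect /gjordan /gmul /gadd /=.
case: phiE_entries => -> -> _ _; rewrite -e12 !(pairingE, actAMNr, add0r, addr0).
by rewrite -addrA addKr addrC => /subr0_eq ->.
Qed.

Lemma phi_intertwinesN : intertwinesN G (g11 p) (g22 q).
Proof.
move=> n; pose X : gmat := GMat 0 0 n 0; pose X' : gmat := GMat 0 0 (- n) 0.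
have zUV : jordan_defect (E11 + X) (E22 + X') = 0.
  apply: phi_zero_product; rewrite /X /X' !GMatD /gmul /=;
  by rewrite !(pairingE, mulr0, mul0r, addr0, add0r, addrN).
have zXX' : jordan_defect X X' = 0.
  by apply: phi_zero_product; rewrite /X /X' /gmul /= !(pairingE, mulr0, addr0).
have phiXX' : phi X + phi X' = 0.
  by rewrite -phi_add /X /X' GMatD subrr !addr0 (additive0 phi_add).
have e21 := addr0_eq (congr1 (@g21 _ _ _ _) phiXX').
rewrite jordan_defectDl !jordan_defectDr jordan_defect_E11_E22 zXX' add0r addr0 in zUV.
move: zUV => /(congr1 (@g21 _ _ _ _)); rewrite /jordan_defect /gjordan /gmul /gadd /=.
case: phiE_entries => -> -> _ _; rewrite -e21 !(pairingE, actNANl, add0r, addr0).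
by rewrite -addrA addKr addrC => /subr0_eq ->.
Qed.
End ZeroProductJordan.

Theorem lemma2p2 (A B : pzRingType) (M N : zmodType) (G : GMR A B M N)
  (hA : two_torsion_free A) (hB : two_torsion_free B)
  (phi : gmat A B M N -> gmat A B M N)
  (phi_add : forall X Y, phi (gadd X Y) = gadd (phi X) (phi Y))
  (hphi : forall U V, gmul G U V = gzero A B M N -> gmul G V U = gzero A B M N ->
            gadd (gjordan G (phi U) V) (gjordan G U (phi V)) = gzero A B M N) :
  gcenter G (phi (gone A B M N)) /\
  (forall P, gmul G P P = P ->
     gmul G P (phi (gone A B M N)) = gmul G (phi (gone A B M N)) P).
Proof.
have phi1_central : gcenter G (phi (gone A B M N)).
  rewrite (phi1_diag phi_add hphi hA hB).
  apply: gcenter_diag; [exact: phi_intertwinesM | exact: phi_intertwinesN].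
by split=> // P _; rewrite phi1_central.
Qed.
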